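(* Let $\mathcal W_1$ be a discrete memoryless channel from $\mathcal X_1$ to $\mathcal Y_1$ and $\mathcal W_2$ one from $\mathcal X_2$ to $\mathcal Y_2$ (all finite sets), and let $(\mathcal W_1\times\mathcal W_2)(y_1,y_2|x_1,x_2)=\mathcal W_1(y_1|x_1)\mathcal W_2(y_2|x_2)$. Then $U(\mathcal W_1\times\mathcal W_2)=U(\mathcal W_1)+U(\mathcal W_2)$.
   Context: $D(P\|Q)=\sum P\log(P/Q)$ ($0\log(0/q)=0$; $+\infty$ if $P\not\ll Q$). For a channel $\mathcal W$ from $\mathcal X$ to $\mathcal Y$, $U(\mathcal W)=\max_{P_X\in\mathcal P(\mathcal X)}\min_{Q_Y\in\mathcal P(\mathcal Y)}D(P_X\times Q_Y\|P_{XY})$ with $P_{XY}(x,y)=P_X(x)\mathcal W(y|x)$. *)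

From HB Require Import structures.
From mathcomp Require Import all_boot all_order all_algebra.
From mathcomp Require Import all_classical all_reals all_analysis.
Set Implicit Arguments. Unset Strict Implicit. Unset Printing Implicit Defensive.
Import Order.TTheory GRing.Theory Num.Theory.
Local Open Scope classical_set_scope.
Local Open Scope ring_scope.

Definition dists (R : realType) (T : finType) : set (T -> R) :=
  [set P | (forall t, 0 <= P t) /\ \sum_(t : T) P t = 1].

(* a discrete memoryless channel: a stochastic matrix W(y|x) = W x y *)
Definition is_channel (R : realType) (X Y : finType) (W : X -> Y -> R) : Prop :=
  (forall x y, 0 <= W x y) /\ (forall x, \sum_(y : Y) W x y = 1).

Definition KL (R : realType) (T : finType) (P Q : T -> R) : \bar R :=
  if `[< exists t, P t != 0 /\ Q t = 0 >] then +oo%E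
  else (\sum_(t : T) (if P t == 0 then 0 else P t * ln (P t / Q t)))%:E.

Definition prod_channel (R : realType) (X1 Y1 X2 Y2 : finType)
  (W1 : X1 -> Y1 -> R) (W2 : X2 -> Y2 -> R) : (X1 * X2)%type -> (Y1 * Y2)%type -> R :=
  fun x y => W1 x.1 y.1 * W2 x.2 y.2.

Definition Uch (R : realType) (X Y : finType) (W : X -> Y -> R) : \bar R :=
  ereal_sup ((fun PX : X -> R =>
     ereal_inf ((fun QY : Y -> R =>
        KL (fun xy : (X * Y)%type => PX xy.1 * QY xy.2)
           (fun xy : (X * Y)%type => PX xy.1 * W xy.1 xy.2)) @` @dists R Y)) @` @dists R X).

From HB Require Import structures.
From mathcomp Require Import all_boot all_order all_algebra.
From mathcomp Require Import all_classical all_reals all_analysis.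
From mathcomp Require Import ring lra.
Set Implicit Arguments. Unset Strict Implicit. Unset Printing Implicit Defensive.
Import Order.TTheory GRing.Theory Num.Theory.
Local Open Scope classical_set_scope.
Local Open Scope ring_scope.

(* For a fixed input law P, D(P x Q || P W) = D(Q || g_P) where
   g_P(y) = prod_x W(y|x)^P(x) is an unnormalised law on the outputs, so by
   Gibbs' inequality the inner minimum is -ln (sum_y g_P(y)), attained at the
   normalisation of g_P. For the product channel, g_P factorises as the
   product of the g's of the two marginals of P; hence the objective of the
   product channel at P is the sum of the objectives of the factors at the
   marginals (giving <=), and every pair of inputs is the pair of marginals of
   its product law (giving >=). *)

Lemma sum_pair (R : realType) (T1 T2 : finType) (F : T1 * T2 -> R) :
  \sum_(t : T1 * T2) F t = \sum_t1 \sum_t2 F (t1, t2).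
Proof. by rewrite pair_bigA; apply: eq_bigr => -[]. Qed.

Lemma psumr_neq0_exists (R : realType) (T : finType) (F : T -> R) :
  (forall t, 0 <= F t) -> (\sum_t F t != 0) = [exists t, F t != 0].
Proof.
move=> F_ge0; rewrite psumr_neq0 //.
apply/hasP/existsP => [[t _ /andP[_ Ft_gt0]]|[t Ft]]; first by exists t; rewrite gt_eqF.
by exists t; rewrite ?mem_index_enum //= lt_def Ft F_ge0.
Qed.

Lemma dists_neq0 (R : realType) (T : finType) (Q : T -> R) :
  dists Q -> exists t, Q t != 0.
Proof.
by move=> [Q_ge0 Q1]; apply/existsP; rewrite -psumr_neq0_exists // Q1 oner_neq0.
Qed.

Lemma sub_le_mul_ln_div (R : realType) (q b : R) :
  0 < q -> 0 < b -> q - b <= q * ln (q / b).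
Proof.
move=> q_gt0 b_gt0.
have := expR_ge1Dx (ln (b / q)); rewrite lnK ?posrE ?divr_gt0 //.
move/(ler_wpM2l (ltW q_gt0)); rewrite mulrDr mulr1 mulrCA divff ?gt_eqF // mulr1.
by rewrite -invf_div lnV ?posrE ?divr_gt0 // mulrN; lra.
Qed.

Section Gibbs.
Variables (R : realType) (T : finType) (g : T -> R).
Hypothesis g_ge0 : forall t, 0 <= g t.

Definition minKL : \bar R :=
  if 0 < \sum_t g t then (- ln (\sum_t g t))%:E else +oo%E.

Lemma KL_ge_ln_sum (Q : T -> R) : dists Q -> 0 < \sum_t g t ->
  ((- ln (\sum_t g t))%:E <= KL Q g)%E.
Proof.
move=> [Q_ge0 Q1]; set S := \sum_t g t => S_gt0; rewrite /KL.
case: asboolP => [_|abs_cont]; first exact: leey.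
have term_ge t : - Q t * ln S + Q t - g t / S <=
    (if Q t == 0 then 0 else Q t * ln (Q t / g t)).
  case: eqVneq => [->|Qt]; first by have := divr_ge0 (g_ge0 t) (ltW S_gt0); lra.
  have Qt_gt0 : 0 < Q t by rewrite lt_def Qt Q_ge0.
  have gt_gt0 : 0 < g t.
    by rewrite lt_def g_ge0 andbT; apply/eqP => gt0; apply: abs_cont; exists t.
  have := sub_le_mul_ln_div Qt_gt0 (divr_gt0 gt_gt0 S_gt0).
  by rewrite invf_div mulrCA [ln (S * _)]lnM ?posrE ?divr_gt0 // mulrDr; lra.
rewrite lee_fin; apply: le_trans (ler_sum _ (fun t _ => term_ge t)).
rewrite sumrB big_split /= -!big_distrl /= sumrN Q1 -/S mulfV ?gt_eqF //; lra.
Qed.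

Lemma KL_normalised : 0 < \sum_t g t ->
  KL (fun t => g t / \sum_t g t) g = (- ln (\sum_t g t))%:E.
Proof.
set S := \sum_t g t => S_gt0; rewrite /KL asboolF; last first.
  by move=> [t [+ gt0]]; rewrite gt0 mul0r eqxx.
congr EFin; rewrite (eq_bigr (fun t => g t / S * - ln S)); last first.
  move=> t _; case: (eqVneq (g t) 0) => [->|gt]; first by rewrite !mul0r eqxx.
  rewrite mulf_eq0 invr_eq0 (negbTE gt) gt_eqF //= [g t / S / g t]mulrAC.
  by rewrite divff // mul1r lnV ?posrE.
by rewrite -!big_distrl /= -/S mulfV ?gt_eqF // mul1r.
Qed.

Lemma KL_sum0 (Q : T -> R) : dists Q -> \sum_t g t = 0 -> KL Q g = +oo%E.
Proof.
move=> Q_dist /(psumr_eq0P (fun t _ => g_ge0 t)) g0.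
have [t Qt] := dists_neq0 Q_dist.
by rewrite /KL asboolT //; exists t; split => //; exact: g0.
Qed.

Lemma ereal_inf_KL : ereal_inf ((fun Q => KL Q g) @` @dists R T) = minKL.
Proof.
rewrite /minKL; case: ifPn => [S_gt0|].
  apply/le_anti/andP; split.
    apply: ereal_inf_lbound; exists (fun t => g t / \sum_t g t).
      split; first by move=> t; exact: divr_ge0 (g_ge0 t) (ltW S_gt0).
      by rewrite -big_distrl /= mulfV ?gt_eqF.
    exact: KL_normalised.
  by apply/ereal_infP => _ [Q Q_dist <-]; exact: KL_ge_ln_sum.
rewrite lt_def sumr_ge0 // andbT negbK => /eqP S0.
by apply/ereal_inf_pinfty => _ [Q Q_dist <-]; exact: KL_sum0.
Qed.

End Gibbs.

Lemma minKL_prod (R : realType) (T1 T2 : finType) (g1 : T1 -> R) (g2 : T2 -> R) :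
  (forall t, 0 <= g1 t) -> (forall t, 0 <= g2 t) ->
  minKL (fun t : T1 * T2 => g1 t.1 * g2 t.2) = (minKL g1 + minKL g2)%E.
Proof.
move=> g1_ge0 g2_ge0; rewrite /minKL.
have -> : \sum_(t : T1 * T2) g1 t.1 * g2 t.2 = (\sum_t g1 t) * (\sum_t g2 t).
  by rewrite sum_pair big_distrl; apply: eq_bigr => t1 _; rewrite big_distrr.
have S1_ge0 : 0 <= \sum_t g1 t by exact: sumr_ge0.
have S2_ge0 : 0 <= \sum_t g2 t by exact: sumr_ge0.
have [S1_gt0|] := ltP 0 (\sum_t g1 t); last first.
  move=> S1_le0; have -> : \sum_t g1 t = 0 by apply/le_anti/andP.
  by rewrite mul0r ltxx addye //; case: ifP.
have [S2_gt0|] := ltP 0 (\sum_t g2 t); last first.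
  move=> S2_le0; have -> : \sum_t g2 t = 0 by apply/le_anti/andP.
  by rewrite mulr0 ltxx addey.
by rewrite mulr_gt0 // lnM ?posrE // opprD EFinD.
Qed.

Section Channel.
Variables (R : realType) (X Y : finType) (W : X -> Y -> R) (P : X -> R).

Definition admissible (y : Y) : bool := [forall x, (P x != 0) ==> (W x y != 0)].

Definition mean_ln (y : Y) : R := \sum_x P x * ln (W x y).

(* The weighted geometric mean prod_x W(x,y)^(P x); it vanishes exactly at the
   outputs that some input of the support of P cannot produce. *)
Definition geomean (y : Y) : R := if admissible y then expR (mean_ln y) else 0.

Lemma geomean_ge0 y : 0 <= geomean y.
Proof. by rewrite /geomean; case: ifP => // _; exact/ltW/expR_gt0. Qed.

Lemma geomean_eq0 y : (geomean y == 0) = ~~ admissible y.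
Proof. by rewrite /geomean; case: ifP; rewrite ?eqxx // gt_eqF ?expR_gt0. Qed.

Hypothesis W_ge0 : forall x y, 0 <= W x y.
Hypothesis P_sum1 : \sum_x P x = 1.

Lemma KL_input_product (Q : Y -> R) : (forall y, 0 <= Q y) ->
  KL (fun xy : X * Y => P xy.1 * Q xy.2) (fun xy : X * Y => P xy.1 * W xy.1 xy.2) =
  KL Q geomean.
Proof.
move=> Q_ge0; rewrite /KL.
have -> : `[< exists xy : X * Y, P xy.1 * Q xy.2 != 0 /\ P xy.1 * W xy.1 xy.2 = 0 >] =
          `[< exists y, Q y != 0 /\ geomean y = 0 >].
  apply/asboolP/asboolP => [[[x y] /= []]|[y [Qy /eqP]]].
    rewrite mulf_eq0 negb_or => /andP[Px Qy] /eqP; rewrite mulf_eq0 (negbTE Px) /=.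
    move=> Wxy; exists y; split => //; apply/eqP; rewrite geomean_eq0.
    by apply/forallPn; exists x; rewrite Px negbK.
  rewrite geomean_eq0 => /forallPn[x]; rewrite negb_imply negbK => /andP[Px /eqP Wxy].
  by exists (x, y); rewrite /= Wxy mulr0 mulf_neq0.
case: asboolP => // abs_cont; congr EFin.
rewrite sum_pair exchange_big; apply: eq_bigr => y _ /=.
case: (eqVneq (Q y) 0) => [Qy0|Qy].
  by apply: big1 => x _; rewrite Qy0 mulr0 eqxx.
have Qy_gt0 : 0 < Q y by rewrite lt_def Qy Q_ge0.
have adm : admissible y.
  by apply/negPn; rewrite -geomean_eq0; apply/eqP => g0; apply: abs_cont; exists y.
rewrite /geomean adm ln_div ?posrE ?expR_gt0 // expRK.
transitivity (\sum_x (P x * Q y * ln (Q y) - Q y * (P x * ln (W x y)))).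
  apply: eq_bigr => x _; case: (eqVneq (P x) 0) => [->|Px].
    by rewrite !mul0r eqxx mulr0 subr0.
  have Wxy_gt0 : 0 < W x y.
    by rewrite lt_def W_ge0 andbT; exact: (implyP (forallP adm x) Px).
  rewrite mulf_eq0 (negbTE Px) (negbTE Qy) invfM mulrACA mulfV // mul1r.
  by rewrite ln_div ?posrE //; ring.
by rewrite sumrB -!big_distrl -big_distrr /= P_sum1 mul1r mulrBr.
Qed.

End Channel.

Lemma UchE (R : realType) (X Y : finType) (W : X -> Y -> R) :
  (forall x y, 0 <= W x y) ->
  Uch W = ereal_sup ((fun P => minKL (geomean W P)) @` @dists R X).
Proof.
move=> W_ge0; rewrite /Uch; congr ereal_sup; apply: eq_imagel => P [_ P_sum1].
rewrite -(ereal_inf_KL (geomean_ge0 W P)); congr ereal_inf.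
by apply: eq_imagel => Q [Q_ge0 _]; exact: KL_input_product.
Qed.

Section Marginals.
Variables (R : realType) (T1 T2 : finType).

Definition fst_marginal (P : T1 * T2 -> R) (t1 : T1) : R := \sum_t2 P (t1, t2).
Definition snd_marginal (P : T1 * T2 -> R) (t2 : T2) : R := \sum_t1 P (t1, t2).

Lemma dists_prod (p1 : T1 -> R) (p2 : T2 -> R) :
  dists p1 -> dists p2 -> dists (fun t : T1 * T2 => p1 t.1 * p2 t.2).
Proof.
move=> [p1_ge0 p1_sum1] [p2_ge0 p2_sum1]; split=> [t|]; first exact: mulr_ge0.
rewrite sum_pair -p1_sum1; apply: eq_bigr => t1 _ /=.
by rewrite -big_distrr /= p2_sum1 mulr1.
Qed.

Lemma fst_marginal_prod (p1 : T1 -> R) (p2 : T2 -> R) : dists p2 ->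
  fst_marginal (fun t => p1 t.1 * p2 t.2) = p1.
Proof.
move=> [_ p2_sum1]; apply/funext => t1.
by rewrite /fst_marginal /= -big_distrr /= p2_sum1 mulr1.
Qed.

Lemma snd_marginal_prod (p1 : T1 -> R) (p2 : T2 -> R) : dists p1 ->
  snd_marginal (fun t => p1 t.1 * p2 t.2) = p2.
Proof.
move=> [_ p1_sum1]; apply/funext => t2.
by rewrite /snd_marginal /= -big_distrl /= p1_sum1 mul1r.
Qed.

Variable P : T1 * T2 -> R.
Hypothesis P_ge0 : forall t, 0 <= P t.

Lemma fst_marginal_neq0 t1 : (fst_marginal P t1 != 0) = [exists t2, P (t1, t2) != 0].
Proof. exact: psumr_neq0_exists. Qed.

Lemma snd_marginal_neq0 t2 : (snd_marginal P t2 != 0) = [exists t1, P (t1, t2) != 0].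
Proof. exact: psumr_neq0_exists. Qed.

Hypothesis P_sum1 : \sum_t P t = 1.

Lemma dists_fst_marginal : dists (fst_marginal P).
Proof. by split=> [t1|]; [exact: sumr_ge0 | rewrite -P_sum1 sum_pair]. Qed.

Lemma dists_snd_marginal : dists (snd_marginal P).
Proof. by split=> [t2|]; [exact: sumr_ge0 | rewrite -P_sum1 sum_pair exchange_big]. Qed.

End Marginals.

Section Product_channel.
Variables (R : realType) (X1 Y1 X2 Y2 : finType).
Variables (W1 : X1 -> Y1 -> R) (W2 : X2 -> Y2 -> R) (P : X1 * X2 -> R).
Hypotheses (W1_ge0 : forall x y, 0 <= W1 x y) (W2_ge0 : forall x y, 0 <= W2 x y).
Hypothesis P_ge0 : forall x, 0 <= P x.

Lemma admissible_prod_channel y1 y2 :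
  admissible (prod_channel W1 W2) P (y1, y2) =
  admissible W1 (fst_marginal P) y1 && admissible W2 (snd_marginal P) y2.
Proof.
rewrite /admissible /prod_channel.
apply/forallP/andP => [adm|[/forallP adm1 /forallP adm2] [x1 x2]].
  split; apply/forallP => x; apply/implyP;
    rewrite ?fst_marginal_neq0 ?snd_marginal_neq0 // => /existsP[x' Px];
    by have := implyP (adm (_, _)) Px; rewrite mulf_eq0 negb_or => /andP[].
apply/implyP => Px; rewrite mulf_neq0 //=.
  by apply: (implyP (adm1 x1)); rewrite fst_marginal_neq0 //; apply/existsP; exists x2.
by apply: (implyP (adm2 x2)); rewrite snd_marginal_neq0 //; apply/existsP; exists x1.
Qed.

Lemma mean_ln_prod_channel y1 y2 : admissible (prod_channel W1 W2) P (y1, y2) ->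
  mean_ln (prod_channel W1 W2) P (y1, y2) =
  mean_ln W1 (fst_marginal P) y1 + mean_ln W2 (snd_marginal P) y2.
Proof.
move=> adm; rewrite /mean_ln.
rewrite (eq_bigr (fun x => P x * ln (W1 x.1 y1) + P x * ln (W2 x.2 y2))); last first.
  move=> [x1 x2] _; case: (eqVneq (P (x1, x2)) 0) => [->|Px].
    by rewrite !mul0r addr0.
  have := implyP (forallP adm (x1, x2)) Px; rewrite /prod_channel mulf_eq0 negb_or /=.
  case/andP => W1_neq0 W2_neq0.
  by rewrite lnM ?posrE ?lt_def ?W1_neq0 ?W2_neq0 ?W1_ge0 ?W2_ge0 // mulrDr.
rewrite big_split /= !sum_pair [X in _ + X = _]exchange_big /=.
by congr (_ + _); apply: eq_bigr => x _; rewrite big_distrl.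
Qed.

Lemma geomean_prod_channel :
  geomean (prod_channel W1 W2) P =
  (fun y => geomean W1 (fst_marginal P) y.1 * geomean W2 (snd_marginal P) y.2).
Proof.
apply/funext => -[y1 y2] /=; rewrite /geomean admissible_prod_channel.
case: (boolP (admissible W1 _ y1)) => adm1; rewrite ?mul0r //=.
case: (boolP (admissible W2 _ y2)) => adm2; rewrite ?mulr0 //.
by rewrite mean_ln_prod_channel ?admissible_prod_channel ?adm1 ?adm2 // expRD.
Qed.

End Product_channel.

Lemma adde_ereal_sup_le (R : realType) (x c : \bar R) (B : set (\bar R)) :
  (forall b, B b -> (x + b <= c)%E) -> (x + ereal_sup B <= c)%E.
Proof.
case: x => [r| |] xB_le; last by rewrite addNye leNye.
  by rewrite -leeBrDl //; apply/ereal_supP => b Bb; rewrite leeBrDl //; exact: xB_le.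
have [[b Bb b_neqNy]|B_Ny] := pselect (exists2 b, B b & b != -oo%E).
  by have := xB_le _ Bb; rewrite addye // leye_eq => /eqP ->; exact: leey.
have -> : ereal_sup B = -oo%E.
  by apply/ereal_sup_ninfty => b Bb; apply/eqP; apply: contra_notT B_Ny; exists b.
by rewrite addeNy leNye.
Qed.

Lemma ereal_supD_le (R : realType) (A B : set (\bar R)) (c : \bar R) :
  (forall a b, A a -> B b -> (a + b <= c)%E) -> (ereal_sup A + ereal_sup B <= c)%E.
Proof.
move=> AB_le; apply: adde_ereal_sup_le => b Bb; rewrite addeC.
by apply: adde_ereal_sup_le => a Aa; rewrite addeC; exact: AB_le.
Qed.

Theorem mainTheorem7 (R : realType) (X1 Y1 X2 Y2 : finType)
  (W1 : X1 -> Y1 -> R) (W2 : X2 -> Y2 -> R) :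
  is_channel W1 -> is_channel W2 ->
  Uch (prod_channel W1 W2) = (Uch W1 + Uch W2)%E.
Proof.
move=> [W1_ge0 _] [W2_ge0 _].
have W_ge0 x y : 0 <= prod_channel W1 W2 x y by exact: mulr_ge0.
rewrite !UchE //; apply/le_anti/andP; split.
  apply/ereal_supP => _ [P [P_ge0 P_sum1] <-].
  rewrite geomean_prod_channel // (minKL_prod (geomean_ge0 _ _) (geomean_ge0 _ _)).
  by apply: leeD; apply: ereal_sup_ubound; eexists;
    [exact: dists_fst_marginal | by [] | exact: dists_snd_marginal | by []].
apply: ereal_supD_le => _ _ [p1 p1_dist <-] [p2 p2_dist <-].
apply: ereal_sup_ubound; exists (fun x => p1 x.1 * p2 x.2); first exact: dists_prod.
have [p_ge0 _] := dists_prod p1_dist p2_dist.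
by rewrite geomean_prod_channel // (minKL_prod (geomean_ge0 _ _) (geomean_ge0 _ _))
  fst_marginal_prod // snd_marginal_prod.
Qed.
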